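(* Let $a,b\in\mathbb{N}$ with $2\leq b\leq a$ and let $x_1\geq x_2\geq\cdots\geq x_b\geq 0$ be reals. Then $$(a-b+1)\,a^{\log_b x_b}+\sum_{i=1}^{b-1}a^{\log_b x_i}\leq a^{\log_b\sum_{i=1}^{b}x_i}.$$
   Context: By convention $a^{\log_b 0}=0$, so $x_b$ (and any $x_i$) may be $0$. *)

From mathcomp Require Import all_boot all_order all_algebra.
From mathcomp Require Import reals exp.
Set Implicit Arguments. Unset Strict Implicit. Unset Printing Implicit Defensive.
Import Order.TTheory GRing.Theory Num.Theory.
Local Open Scope ring_scope.

(* alogb a b x = a^{log_b x}, with the paper's convention a^{log_b 0} = 0.
   log_b x = ln x / ln b. *)
Definition alogb (R : realType) (a b : nat) (x : R) : R :=
  if x == 0 then 0 else powR (a%:R) (ln x / ln (b%:R)).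

(* With c := ln a / ln b >= 1 one has a^{log_b y} = y^c and b^c = a.  Let
   t := x_b be the smallest term.  Convexity of y |-> y^c makes its increments
   grow with the base point: (t + d)^c - t^c <= (B + d)^c - B^c for t <= B and
   d >= 0.  Starting from B := b t and moving the excesses x_i - t (i < b) onto B
   one at a time gives
     (b t)^c + sum_{i<b} x_i^c <= (sum_{i<=b} x_i)^c + (b - 1) t^c,
   and (b t)^c = a t^c turns this into the claim. *)
From mathcomp Require Import all_boot all_order all_algebra.
From mathcomp Require Import classical_sets interval_inference reals exp convex hoelder.
From mathcomp Require Import ring lra zify.
Import Order.TTheory GRing.Theory Num.Theory.
Set Implicit Arguments. Unset Strict Implicit.
Local Open Scope ring_scope.

Section PowRConvexity.
Variables (R : realType) (c : R).
Hypothesis c_ge1 : 1 <= c.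

Lemma powR_convex_le (t x y : R) : 0 <= t -> t <= 1 -> 0 <= x -> 0 <= y ->
  (t * x + (1 - t) * y) `^ c <= t * x `^ c + (1 - t) * y `^ c.
Proof.
move=> t0 t1 x0 y0.
have := @convex_powR R c c_ge1 (Itv01 t0 t1) x y.
by rewrite !inE /= !in_itv /= !andbT => /(_ x0 y0); rewrite !convRE.
Qed.

(* Both [u] and [w + v] are convex combinations of [w] and [u + v], with
   complementary weights. *)
Lemma powR_increment_le (w u v : R) : 0 <= w -> w <= u -> 0 <= v ->
  (w + v) `^ c + u `^ c <= w `^ c + (u + v) `^ c.
Proof.
move=> w0 wu v0; set L := u + v - w.
have [L0|L_neq0] := eqVneq L 0.
  have [uw v_eq0] : u = w /\ v = 0 by rewrite /L in L0; split; lra.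
  by rewrite uw v_eq0 addr0 addrC.
have L_gt0 : 0 < L by rewrite lt_neqAle eq_sym L_neq0 /L; lra.
set p := v / L.
have p0 : 0 <= p by rewrite divr_ge0 // ltW.
have p1 : p <= 1 by rewrite ler_pdivrMr // mul1r /L; lra.
have uE : p * w + (1 - p) * (u + v) = u by rewrite /p /L; field; rewrite -/L.
have wvE : (1 - p) * w + (1 - (1 - p)) * (u + v) = w + v.
  by rewrite /p /L; field; rewrite -/L.
have uv0 : 0 <= u + v by lra.
have := powR_convex_le p0 p1 w0 uv0; rewrite uE.
have := @powR_convex_le (1 - p) _ _ ltac:(lra) ltac:(lra) w0 uv0; rewrite wvE.
lra.
Qed.

Lemma powR_sum_shift_le (B t : R) (s : seq R) :
  0 <= t -> t <= B -> (forall r, r \in s -> 0 <= r) ->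
  B `^ c + \sum_(r <- s) (t + r) `^ c <=
    (B + \sum_(r <- s) r) `^ c + (size s)%:R * t `^ c.
Proof.
elim: s B => [|r s IH] B t0 tB s_ge0.
  by rewrite !big_nil !addr0 mul0r addr0.
have r0 : 0 <= r by apply: s_ge0; rewrite mem_head.
have tBr : t <= B + r by lra.
have := IH (B + r) t0 tBr (fun q qs => s_ge0 q (mem_behead (s := r :: s) qs)).
have := powR_increment_le t0 tB r0.
rewrite !big_cons /= -natr1 [B + (r + _)]addrA; lra.
Qed.

End PowRConvexity.

Section Exponent.
Variables (R : realType) (a b : nat).
Hypotheses (b_ge2 : (2 <= b)%N) (b_le_a : (b <= a)%N).

Let ln_b_gt0 : 0 < ln (b%:R : R).
Proof. by rewrite ln_gt0 // ltr1n. Qed.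

Let a_gt0 : 0 < (a%:R : R).
Proof. by rewrite ltr0n; lia. Qed.

Lemma alogb_exponent_ge1 : 1 <= ln (a%:R : R) / ln b%:R.
Proof.
rewrite ler_pdivlMr // mul1r ler_ln ?posrE ?ler_nat // ltr0n; lia.
Qed.

Lemma powR_alogb_exponent : (b%:R : R) `^ (ln (a%:R : R) / ln b%:R) = a%:R.
Proof.
have b_neq0 : (b%:R : R) != 0 by rewrite pnatr_eq0; lia.
by rewrite /powR (negbTE b_neq0) mulfVK ?gt_eqF // lnK.
Qed.

Lemma alogbE (y : R) : 0 <= y -> alogb a b y = y `^ (ln (a%:R : R) / ln b%:R).
Proof.
move=> y0; rewrite /alogb.
have [->|y_neq0] := eqVneq y 0.
  by rewrite powR0 // mulf_neq0 ?invr_eq0 ?gt_eqF ?ln_gt0 ?ltr1n //; lia.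
by rewrite /powR (negbTE y_neq0) gt_eqF //; f_equal; ring.
Qed.

End Exponent.

Lemma nonincn_in_le_last d (T : porderType d) (x : nat -> T) (m n : nat) :
  (forall i, (m <= i)%N -> (i < n)%N -> (x i.+1 <= x i)%O) ->
  forall i, (m <= i <= n)%N -> (x n <= x i)%O.
Proof.
move=> x_noninc i /andP[mi i_le_n].
apply: (@Order.NatMonotonyTheory.nonincn_inP _ _ [pred i | m <= i <= n]%N) => //.
- move=> j l; rewrite !inE /= => jD lD k; rewrite !ltEnat /= => /andP[jk kl].
  by rewrite inE /=; lia.
- by move=> j; rewrite !inE /= => jD jD'; apply: x_noninc; lia.
- by rewrite inE /=; lia.
- by rewrite inE /=; lia.
Qed.

Lemma powR_sum_min_le (R : realType) (c : R) (b : nat) (x : nat -> R) :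
  1 <= c -> (0 < b)%N -> 0 <= x b -> (forall i, (1 <= i <= b)%N -> x b <= x i) ->
  (b%:R * x b) `^ c + \sum_(1 <= i < b) x i `^ c <=
    (\sum_(1 <= i < b.+1) x i) `^ c + (b - 1)%:R * x b `^ c.
Proof.
move=> c_ge1 b_gt0 xb0 xb_min; set t := x b.
have tb_le : t <= b%:R * t by rewrite ler_peMl // ler1n.
set d := [seq x i - t | i <- index_iota 1 b].
have d_ge0 r : r \in d -> 0 <= r.
  by case/mapP=> i; rewrite mem_index_iota => ib ->; rewrite subr_ge0 xb_min //; lia.
have := powR_sum_shift_le c_ge1 xb0 tb_le d_ge0.
rewrite size_map size_iota subn1 !big_map.
under eq_bigr do rewrite addrC subrK.
suff -> : b%:R * t + \sum_(i <- index_iota 1 b) (x i - t) = \sum_(1 <= i < b.+1) x i by [].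
rewrite big_nat_recr //= sumrB sumr_const_nat -[t *+ _]mulr_natl natrB //.
by rewrite /t; ring.
Qed.

Theorem lemma10 (R : realType) (a b : nat) (x : nat -> R) :
  (2 <= b)%N -> (b <= a)%N ->
  (forall i : nat, (1 <= i)%N -> (i < b)%N -> x i.+1 <= x i) ->
  0 <= x b ->
  (a - b + 1)%:R * alogb a b (x b) + \sum_(1 <= i < b) alogb a b (x i)
    <= alogb a b (\sum_(1 <= i < b.+1) x i).
Proof.
move=> b_ge2 b_le_a x_noninc xb0.
have b_gt0 : (0 < b)%N by lia.
have xb_min i : (1 <= i <= b)%N -> x b <= x i by apply: nonincn_in_le_last.
have x_ge0 i : (1 <= i <= b)%N -> 0 <= x i by move/xb_min; apply: le_trans.
have S_ge0 : 0 <= \sum_(1 <= i < b.+1) x i.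
  by rewrite big_nat_cond sumr_ge0 // => i /andP[/andP[i1 ib] _]; apply: x_ge0; lia.
have alogb_x i : (1 <= i < b)%N -> alogb a b (x i) = x i `^ (ln a%:R / ln b%:R).
  by move=> ib; rewrite alogbE //; apply: x_ge0; lia.
have := powR_sum_min_le (alogb_exponent_ge1 R b_ge2 b_le_a) b_gt0 xb0 xb_min.
rewrite powRM ?ler0n // powR_alogb_exponent // -!alogbE // -(eq_big_nat _ _ alogb_x).
rewrite natrD natrB ?natrB //; lra.
Qed.
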